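(* Let $(P,<)$ be a finite graded poset with rank function $\rho$, and let $w:P\to\mathbb{R}$ be a weight function. Let $G$ be the graph with vertex set $P$ having an edge between $x$ and $y$ if and only if $x\lessdot y$ or $y\lessdot x$; an edge $\{x,y\}$ with $x\lessdot y$ is given weight $w(y)$. Then the maximum score attainable by a legal move sequence in the generalized taxman game on $(P,<,w)$ equals the maximum weight of a matching of $G$ that contains no flat alternating cycle. More precisely, legal move sequences correspond to flat-alternating-cycle-free matchings of $G$ in such a way that the score of the move sequence equals the weight of the matching: from a legal move sequence $p_1,\dots,p_n$ one obtains such a matching $\{(q_i,p_i)\}$ with $q_i\lessdot p_i$, where $q_i$ is a maximal element among those removed by the taxman in move $i$; and conversely, for every flat-alternating-cycle-free matching $\{(x_i,y_i)\}$ with $x_i\lessdot y_i$, the elements $y_i$ can be ordered so as to form a legal move sequence whose score is $\sum_i w(y_i)$.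
   Context: A strict partial order $(P,<)$ is irreflexive, transitive and asymmetric. For $p,q\in P$, $p$ covers $q$, written $q\lessdot p$, if $q<p$ and there is no $x\in P$ with $q<x<p$. A graded poset is a poset $(P,<)$ with a rank function $\rho:P\to\mathbb{N}$ such that $q<p$ implies $\rho(q)<\rho(p)$ and $q\lessdot p$ implies $\rho(p)=\rho(q)+1$. The generalized taxman game on $(P,<,w)$, with $P$ finite and $w:P\to\mathbb{R}$: initially all elements of $P$ are in play. A move consists of picking an element $p$ still in play such that some $q<p$ is still in play (a legal pick); the player gains $w(p)$ points, $p$ is removed, and the taxman removes all elements $a<p$ still in play. A legal move sequence is a finite sequence of legal picks made in succession; its score is the sum of the weights of the picked elements. When no legal picks remain, the taxman claims all remaining elements. For a graph $G$ whose vertex set is a graded poset, a matching is a set of edges no two sharing an endpoint. A cycle is alternating (with respect to a matching) if exactly every other edge of the cycle lies in the matching. A cycle is flat if there is an integer $n$ such that all its vertices have rank $n$ or $n+1$. *)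

From mathcomp Require Import all_boot all_order all_algebra.
Set Implicit Arguments. Unset Strict Implicit. Unset Printing Implicit Defensive.
Import Order.TTheory GRing.Theory Num.Theory.

Section Taxman.
Variables (T : finType) (lt : rel T).

Definition covers (q p : T) : bool :=
  lt q p && [forall x, ~~ (lt q x && lt x p)].

Definition graded (rho : T -> nat) : Prop :=
  (forall q p, lt q p -> rho q < rho p)%N /\
  (forall q p, covers q p -> rho p = (rho q).+1).

Definition taxed_set (S : {set T}) (p : T) : {set T} := [set a in S | lt a p].

Definition step (S : {set T}) (p : T) : {set T} := (S :\ p) :\: taxed_set S p.

Definition legal_pick (S : {set T}) (p : T) : bool :=
  (p \in S) && [exists q in S, lt q p].

Fixpoint legal_from (S : {set T}) (s : seq T) : bool :=
  if s is p :: s' then legal_pick S p && legal_from (step S p) s' else true.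

Definition legal (s : seq T) : bool := legal_from [set: T] s.

Definition state_after (s : seq T) : {set T} := foldl step [set: T] s.

Definition taxed (s1 : seq T) (p : T) : {set T} := taxed_set (state_after s1) p.

Definition maximal_in (a : T) (X : {set T}) : Prop :=
  a \in X /\ (forall b, b \in X -> ~~ lt a b).

Definition adj (x y : T) : bool := covers x y || covers y x.

(* A matching of G: an edge {x,y} with x covered by y is stored as the pair (x,y). *)
Definition is_matching (M : {set T * T}) : Prop :=
  (forall e, e \in M -> covers e.1 e.2) /\
  (forall e f, e \in M -> f \in M -> e != f ->
     [/\ e.1 != f.1, e.1 != f.2, e.2 != f.1 & e.2 != f.2]).

Definition in_matching (M : {set T * T}) (x y : T) : bool :=
  ((x, y) \in M) || ((y, x) \in M).

Definition is_cycle (c : seq T) : bool :=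
  [&& uniq c, (2 < size c)%N & cycle adj c].

Definition cycle_edges (c : seq T) : seq (T * T) := zip c (rot 1 c).

Definition alternating (M : {set T * T}) (c : seq T) : bool :=
  cycle (fun e f : T * T => in_matching M e.1 e.2 != in_matching M f.1 f.2)
        (cycle_edges c).

Definition flat (rho : T -> nat) (c : seq T) : Prop :=
  exists n : nat, forall v, v \in c -> rho v = n \/ rho v = n.+1.

Definition no_flat_alt_cycle (rho : T -> nat) (M : {set T * T}) : Prop :=
  forall c, is_cycle c -> alternating M c -> ~ flat rho c.

Definition good_matching (rho : T -> nat) (M : {set T * T}) : Prop :=
  is_matching M /\ no_flat_alt_cycle rho M.

Variable R : numDomainType.
Variable w : T -> R.

Definition score (s : seq T) : R := (\sum_(p <- s) w p)%R.

Definition mweight (M : {set T * T}) : R := (\sum_(e in M) w e.2)%R.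

Definition is_max_score (m : R) : Prop :=
  (exists s, legal s /\ score s = m) /\ (forall s, legal s -> (score s <= m)%R).

Definition is_max_matching_weight (rho : T -> nat) (m : R) : Prop :=
  (exists M, good_matching rho M /\ mweight M = m) /\
  (forall M, good_matching rho M -> (mweight M <= m)%R).

End Taxman.

From mathcomp Require Import all_boot all_order all_algebra zify.
Set Implicit Arguments. Unset Strict Implicit. Unset Printing Implicit Defensive.

(* From a legal move sequence s, pair each pick p with a maximal element q p
   taken by the taxman at the same move; q p is covered by p because the set
   in play is always an up-set. Every element of these pairs is removed at a
   well-defined time; removal times agree along matched edges and strictly
   increase along the other covers, so around a flat alternating cycle, where
   ranks alternate, 2 * time + [rank is low] would move in one direction all
   the way round, which is impossible.
   Conversely, a matching is played edge by edge, picking upper ends, in an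
   order where no later lower end lies below an earlier upper end. Such an
   order exists: among the edges whose lower ends have minimal rank, a cyclic
   obstruction e_1.1 < e_2.2, e_2.1 < e_3.2, ... consists of covers and, with
   the matching edges, forms a flat alternating cycle. *)

Definition cyc_nth (T : Type) (x0 : T) (c : seq T) (t : nat) : T := nth x0 c (t %% size c).

Lemma cyc_nthDr (T : Type) (x0 : T) c t : cyc_nth x0 c (t + size c) = cyc_nth x0 c t.
Proof. by rewrite /cyc_nth modnDr. Qed.

Lemma cyc_nth_mod (T : Type) (x0 : T) c t : cyc_nth x0 c (t %% size c) = cyc_nth x0 c t.
Proof. by rewrite /cyc_nth modn_mod. Qed.

Lemma modn_modS m d : (m %% d).+1 %% d = m.+1 %% d.
Proof. by rewrite -addn1 modnDml addn1. Qed.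

Lemma nth_rcons_cycle (T : Type) (x0 x : T) s t : t <= size s ->
  nth x0 (rcons s x) t = nth x0 (x :: s) (t.+1 %% (size s).+1).
Proof.
move=> le_ts; rewrite nth_rcons.
case: ltngtP le_ts => [lt_ts _|//|-> _]; last by rewrite modnn.
by rewrite modn_small.
Qed.

Lemma cycle_cyc_nthP (T : Type) (x0 : T) (r : rel T) c : 0 < size c ->
  cycle r c <-> forall t, r (cyc_nth x0 c t) (cyc_nth x0 c t.+1).
Proof.
case: c => [|x s] // _; rewrite /cycle /cyc_nth.
have cyc_step t : t < (size s).+1 -> r (nth x0 (x :: rcons s x) t) (nth x0 (rcons s x) t)
    = r (nth x0 (x :: s) t) (nth x0 (x :: s) (t.+1 %% (size s).+1)).
  by move=> lt_ts; rewrite -rcons_cons nth_rcons /= lt_ts nth_rcons_cycle.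
split=> [/(pathP x0) r_c t | r_c].
  have lt_ts := ltn_pmod t (ltn0Sn (size s)).
  by rewrite -modn_modS -cyc_step //; apply: r_c; rewrite size_rcons.
apply/(pathP x0) => t; rewrite size_rcons => lt_ts.
by rewrite cyc_step // -{1}(modn_small lt_ts); apply: r_c.
Qed.

Lemma cyc_nth_edges (T : finType) (x0 : T) c t : 0 < size c ->
  cyc_nth (x0, x0) (cycle_edges c) t = (cyc_nth x0 c t, cyc_nth x0 c t.+1).
Proof.
case: c => [|x s] // _; rewrite /cyc_nth /cycle_edges size_zip size_rot minnn.
rewrite nth_zip ?size_rot // rot1_cons nth_rcons_cycle ?modn_modS //.
by rewrite -ltnS ltn_pmod.
Qed.

Lemma cyc_nth_mem (T : eqType) (x0 : T) c t : 0 < size c -> cyc_nth x0 c t \in c.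
Proof. by move=> c_gt0; rewrite mem_nth ?ltn_pmod. Qed.

Lemma split_at_index (T : eqType) (s : seq T) p : p \in s ->
  s = take (index p s) s ++ p :: drop (index p s).+1 s.
Proof. by move=> ps; rewrite -{2}(nth_index p ps) -drop_nth ?index_mem ?cat_take_drop. Qed.

(* An f in Y with fewest ancestors lies among the ancestors of its own
   in-neighbour. *)
Lemma no_source_cycle (T : finType) (r : rel T) (Y : {set T}) :
  Y != set0 -> {in Y, forall f, exists2 e, e \in Y & r e f} ->
  exists2 c : seq T, c != [::] & uniq c && cycle r c.
Proof.
move=> /set0Pn[f0 f0Y] pred_Y.
have [f f_Y f_min] := arg_minnP (fun f => #|[set e | connect r e f]|) f0Y.
have [e e_Y r_ef] := pred_Y f f_Y.
have anc_e : [set x | connect r x e] = [set x | connect r x f].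
  apply/eqP; rewrite eqEcard f_min // andbT; apply/subsetP => x; rewrite !inE.
  by move/connect_trans; apply; apply: connect1.
have : f \in [set x | connect r x e] by rewrite anc_e inE connect0.
rewrite inE => /connectP[p r_p]; case: (shortenP r_p) => p' r_p' uniq_p' _ e_last.
by exists (f :: p') => //; rewrite uniq_p' /= rcons_path r_p' -e_last r_ef.
Qed.

(* The potential 2 tau + ~~ up moves in the same direction at every step, since
   [m t == up t] is invariant; so it cannot return to its initial value. *)
Lemma no_cyclic_alternating_potential (k : nat) (m up : nat -> bool) (tau : nat -> nat) :
  0 < k -> tau k = tau 0 -> up k = up 0 ->
  (forall t, m t.+1 = ~~ m t) -> (forall t, up t.+1 = ~~ up t) ->
  (forall t, m t -> tau t = tau t.+1) ->
  (forall t, ~~ m t -> if up t.+1 then tau t < tau t.+1 else tau t.+1 < tau t) ->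
  False.
Proof.
move=> k_gt0 tau_k up_k mS upS tau_m tau_nm.
pose h t := (tau t).*2 + ~~ up t.
have D_const t : (m t == up t) = (m 0 == up 0).
  by elim: t => // t <-; rewrite mS upS; case: (m t); case: (up t).
have h_step t : if m 0 == up 0 then h t < h t.+1 else h t.+1 < h t.
  rewrite -(D_const t) /h upS.
  by case: (boolP (m t)) => [/tau_m -> | /tau_nm]; rewrite ?upS; case: (up t) => /=; lia.
have h_k : h k = h 0 by rewrite /h tau_k up_k.
case: (m 0 == up 0) h_step => h_step.
  have := @homo_ltn _ h (fun x y => x < y) (fun _ _ _ => @ltn_trans _ _ _) h_step 0 _ k_gt0.
  by rewrite h_k ltnn.
have := @homo_ltn _ h (fun x y => y < x) (fun _ _ _ lt_yx lt_zy => ltn_trans lt_zy lt_yx).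
by move=> /(_ h_step 0 _ k_gt0); rewrite h_k ltnn.
Qed.

Section TaxmanGame.
Variables (T : finType) (lt : rel T).
Hypothesis lt_trans : transitive lt.

Lemma in_step x (S : {set T}) p :
  (x \in step lt S p) = [&& x \in S, x != p & ~~ lt x p].
Proof. by rewrite !inE; case: (x \in S); rewrite /= ?andbT ?andbF // andbC. Qed.

Lemma step_subset (S : {set T}) p : step lt S p \subset S.
Proof. by apply/subsetP => x; rewrite in_step => /andP[]. Qed.

Lemma state_after_cat_subset s1 s2 :
  state_after lt (s1 ++ s2) \subset state_after lt s1.
Proof.
rewrite /state_after foldl_cat; elim: s2 (foldl _ _ s1) => [|p s2 IHs] S /=.
  exact: subxx.
exact: subset_trans (IHs _) (step_subset S p).
Qed.

Lemma foldl_step_up (S : {set T}) s :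
  (forall a x, a \in S -> lt a x -> x \in S) ->
  forall a x, a \in foldl (step lt) S s -> lt a x -> x \in foldl (step lt) S s.
Proof.
elim: s S => [|p s IHs] S S_up //=; apply: IHs => a x.
rewrite !in_step => /and3P[aS n_ap n_lt_ap] lt_ax; rewrite (S_up a x aS lt_ax) /=.
apply/andP; split; first by apply: contraNneq n_lt_ap => <-.
by apply: contra n_lt_ap; apply: lt_trans.
Qed.

Lemma state_after_up s a x :
  a \in state_after lt s -> lt a x -> x \in state_after lt s.
Proof. by apply: foldl_step_up => ? y; rewrite inE. Qed.

Lemma legal_from_cat (S : {set T}) s1 s2 : legal_from lt S (s1 ++ s2) =
  legal_from lt S s1 && legal_from lt (foldl (step lt) S s1) s2.
Proof. by elim: s1 S => [|p s1 IHs] S //=; rewrite IHs andbA. Qed.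

Lemma legal_pick_cat s1 p s2 :
  legal lt (s1 ++ p :: s2) -> legal_pick lt (state_after lt s1) p.
Proof. by rewrite /legal legal_from_cat /= => /and3P[]. Qed.

Lemma legal_from_subset (S : {set T}) s : legal_from lt S s -> {subset s <= S}.
Proof.
elim: s S => [|p s IHs] S //= /andP[/andP[pS _] /IHs sub_s] x.
by rewrite inE => /predU1P[-> //|/sub_s]; apply: subsetP (step_subset S p) x.
Qed.

Lemma legal_uniq s : legal lt s -> uniq s.
Proof.
rewrite /legal; elim: s [set: T] => [|p s IHs] S //= /andP[_ /[dup] /IHs -> ].
move/legal_from_subset => sub_s; rewrite andbT.
by apply/negP => /sub_s; rewrite in_step eqxx andbF.
Qed.

End TaxmanGame.

Section RemovalTimes.
Variables (T : finType) (lt : rel T).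
Hypothesis lt_trans : transitive lt.
Variable s : seq T.

Definition state_at (j : nat) : {set T} := state_after lt (take j s).

Definition removal_time (v : T) : nat :=
  count (fun j => v \in state_at j) (iota 0 (size s)).

Lemma state_at_mono j j' : j <= j' -> state_at j' \subset state_at j.
Proof.
by move=> le_jj'; rewrite /state_at -(cat_take_drop j (take j' s)) take_takel
  // state_after_cat_subset.
Qed.

Lemma state_at_index p : p \in s ->
  state_at (index p s).+1 = step lt (state_at (index p s)) p.
Proof.
move=> ps; rewrite /state_at (take_nth p) ?index_mem // nth_index //.
by rewrite /state_after foldl_rcons.
Qed.

Lemma removal_timeE v i : i < size s ->
  v \in state_at i -> v \notin state_at i.+1 -> removal_time v = i.+1.
Proof.
move=> lt_is v_in v_out; rewrite /removal_time.
rewrite (@eq_in_count _ _ (fun j => j <= 0 + i)) => [|j _ /=].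
  by rewrite -size_filter filter_iota_leq ?size_iota.
case: leqP => [le_ji | lt_ij]; first exact: subsetP (state_at_mono le_ji) _ v_in.
by apply: contraNF v_out; apply: subsetP (state_at_mono lt_ij) v.
Qed.

Lemma removal_time_le a b : lt a b -> removal_time a <= removal_time b.
Proof. by move=> lt_ab; apply: sub_count => j /= /state_after_up; apply. Qed.

End RemovalTimes.

Definition matched (T : finType) (M : {set T * T}) (v : T) : bool :=
  [exists e in M, (v == e.1) || (v == e.2)].

Lemma in_matching_matched (T : finType) (M : {set T * T}) x y :
  in_matching M x y -> matched M x && matched M y.
Proof.
case/orP=> [xy_in | yx_in]; apply/andP; split; apply/existsP;
  by [exists (x, y); rewrite xy_in eqxx ?orbT | exists (y, x); rewrite yx_in eqxx ?orbT].
Qed.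

Lemma covers_lt (T : finType) (lt : rel T) x y : covers lt x y -> lt x y.
Proof. by case/andP. Qed.

Section FlatAlternatingCycles.
Variables (T : finType) (lt : rel T) (rho : T -> nat).
Hypothesis rho_graded : graded lt rho.

(* On a flat cycle ranks alternate between n and n + 1, which fixes the
   direction of every cover edge. *)
Lemma potential_no_flat_alt_cycle (M : {set T * T}) (tau : T -> nat) :
  (forall e, e \in M -> tau e.1 = tau e.2) ->
  (forall a b, matched M a -> matched M b -> covers lt a b -> (a, b) \notin M ->
     tau a < tau b) ->
  no_flat_alt_cycle lt rho M.
Proof.
move=> tau_M tau_covers [|x0 c'] // /and3P[_ _ adj_c] alt_c [n flat_c].
set c := x0 :: c' in adj_c alt_c flat_c.
have c_gt0 : 0 < size c by [].
pose V t := cyc_nth x0 c t.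
pose m t := in_matching M (V t) (V t.+1).
pose up t := rho (V t) == n.+1.
have adjV t : adj lt (V t) (V t.+1) := (cycle_cyc_nthP x0 _ c_gt0).1 adj_c t.
have mS t : m t.+1 = ~~ m t.
  have edges_gt0 : 0 < size (cycle_edges c) by rewrite size_zip size_rot minnn.
  have := (cycle_cyc_nthP (x0, x0) _ edges_gt0).1 alt_c t; rewrite !cyc_nth_edges //=.
  by rewrite -/(m t) -/(m t.+1); case: (m t); case: (m t.+1).
have flatV t : rho (V t) = n \/ rho (V t) = n.+1 by apply/flat_c/cyc_nth_mem.
have dirV t : if up t.+1 then covers lt (V t) (V t.+1) else covers lt (V t.+1) (V t).
  case/orP: (adjV t) => cov; move: (proj2 rho_graded _ _ cov) (flatV t) (flatV t.+1);
    by rewrite /up => ? ? ?; case: eqP => ? //; lia.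
have upS t : up t.+1 = ~~ up t.
  have := flatV t; have := flatV t.+1; have := dirV t; rewrite /up.
  by case: ifP => _ /(proj2 rho_graded) ->; lia.
have matchedS t : matched M (V t.+1).
  have : m t || m t.+1 by rewrite mS orbN.
  by case/orP=> /in_matching_matched /andP[].
have matchedV t : matched M (V t).
  by rewrite /V -cyc_nthDr -(prednK (ltn_addl t c_gt0)); apply: matchedS.
have V_period : V (size c) = V 0 := cyc_nthDr x0 c 0.
apply: (no_cyclic_alternating_potential (tau := tau \o V) (m := m) (up := up) c_gt0).
- by rewrite /= V_period.
- by rewrite /up V_period.
- exact: mS.
- exact: upS.
- by move=> t /orP[] /tau_M.
- move=> t; rewrite /m /in_matching negb_or => /andP[n_e n_e'].
  by have := dirV t; case: ifP => _ cov; apply: tau_covers.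
Qed.

End FlatAlternatingCycles.

Section LegalToMatching.
Variables (T : finType) (lt : rel T) (rho : T -> nat).
Hypotheses (lt_irr : irreflexive lt) (lt_trans : transitive lt).
Hypothesis rho_graded : graded lt rho.
Variables (s : seq T) (q : T -> T).
Hypothesis s_legal : legal lt s.
Hypothesis q_maximal :
  forall s1 p s2, s = s1 ++ p :: s2 -> maximal_in lt (q p) (taxed lt s1 p).

Local Notation M := [set (q p, p) | p in s].
Local Notation tau := (removal_time lt s).

Lemma picked_in_play p : p \in s ->
  [/\ p \in state_at lt s (index p s), q p \in state_at lt s (index p s) & lt (q p) p].
Proof.
move=> ps; have := s_legal; rewrite {1}(split_at_index ps) => /legal_pick_cat/andP[p_in _].
by have [] := q_maximal (split_at_index ps); rewrite inE => /andP[].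
Qed.

Lemma covers_q p : p \in s -> covers lt (q p) p.
Proof.
move=> ps; have [_ q_in lt_qp] := picked_in_play ps.
rewrite /covers lt_qp; apply/forallP => x; apply/negP => /andP[lt_qx lt_xp].
have [_ q_max] := q_maximal (split_at_index ps).
by have := q_max x; rewrite inE lt_xp (state_after_up lt_trans q_in lt_qx) lt_qx => /(_ isT).
Qed.

Lemma removal_time_picked p : p \in s ->
  tau p = (index p s).+1 /\ tau (q p) = (index p s).+1.
Proof.
move=> ps; have [p_in q_in lt_qp] := picked_in_play ps.
have lt_is : index p s < size s by rewrite index_mem.
by split; apply: removal_timeE; rewrite // state_at_index // in_step ?eqxx ?lt_qp !andbF.
Qed.

Lemma picked_matching : is_matching lt M.
Proof.
split=> [_ /imsetP[p ps ->] | _ _ /imsetP[p ps ->] /imsetP[p' p's ->] neq].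
  exact: covers_q.
have ne_pp' : p != p' by apply: contraNneq neq => ->.
have [tp tqp] := removal_time_picked ps; have [tp' tqp'] := removal_time_picked p's.
have ne_tau : (index p s).+1 != (index p' s).+1.
  by rewrite eqSS; apply: contra ne_pp' => /eqP/(index_inj p ps p's)->.
have neq_of_tau x y : tau x = (index p s).+1 -> tau y = (index p' s).+1 -> x != y.
  by move=> tx ty; apply: contraNneq ne_tau => xy; rewrite -tx -ty xy.
by split; apply: neq_of_tau.
Qed.

Lemma matched_picked v : matched M v -> exists2 p, p \in s & (v == q p) || (v == p).
Proof. by case/existsP => _ /andP[/imsetP[p ps ->] v_e]; exists p. Qed.

Lemma removal_time_lt a b : matched M a -> matched M b -> lt a b -> (a, b) \notin M ->
  tau a < tau b.
Proof.
move=> /matched_picked[pa pas a_pa] /matched_picked[pb pbs b_pb] lt_ab ab_M.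
rewrite ltn_neqAle removal_time_le // andbT; apply/eqP => tau_ab.
have [tpa tqpa] := removal_time_picked pas; have [tpb tqpb] := removal_time_picked pbs.
have tau_a : tau a = (index pa s).+1 by case/orP: a_pa => /eqP->.
have tau_b : tau b = (index pb s).+1 by case/orP: b_pb => /eqP->.
have papb : pa = pb by apply: (index_inj pa pas pbs); apply/succn_inj; rewrite -tau_a -tau_b.
have [_ _ lt_qp] := picked_in_play pas.
move: a_pa b_pb ab_M lt_ab; rewrite -papb => /orP[]/eqP-> /orP[]/eqP->.
- by rewrite lt_irr.
- by rewrite imset_f.
- by move=> _ /(lt_trans lt_qp); rewrite lt_irr.
- by rewrite lt_irr.
Qed.

Lemma picked_good_matching : good_matching lt rho M.
Proof.
split; first exact: picked_matching.
apply: (potential_no_flat_alt_cycle rho_graded (tau := tau)); last first.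
  by move=> a b ? ? /andP[lt_ab _]; apply: removal_time_lt.
by move=> _ /imsetP[p ps ->] /=; have [-> ->] := removal_time_picked ps.
Qed.

Lemma picked_matching_spec (R : numDomainType) (w : T -> R) :
  [/\ good_matching lt rho M, (forall p, p \in s -> covers lt (q p) p)
    & mweight w M = score w s].
Proof.
split; [exact: picked_good_matching | exact: covers_q |].
rewrite /mweight /score big_imset => [|x y _ _ []] //.
by rewrite big_uniq ?(legal_uniq s_legal).
Qed.

End LegalToMatching.

Section MaximalTaxed.
Variables (T : finType) (lt : rel T) (rho : T -> nat).
Hypothesis rho_graded : graded lt rho.

Lemma exists_maximal (X : {set T}) : X != set0 ->
  exists2 a, a \in X & forall b, b \in X -> ~~ lt a b.
Proof.
case/set0Pn=> x0 x0X; have [a aX a_max] := arg_maxnP rho x0X.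
by exists a => // b bX; apply/negP => /(proj1 rho_graded); have := a_max b bX; lia.
Qed.

Lemma exists_maximal_taxed s : legal lt s -> exists q : T -> T,
  forall s1 p s2, s = s1 ++ p :: s2 -> maximal_in lt (q p) (taxed lt s1 p).
Proof.
move=> s_legal; pose X p := taxed lt (take (index p s) s) p.
exists (fun p => odflt p [pick a in X p | [forall b in X p, ~~ lt a b]]) => s1 p s2 s_def.
have p_s1 : p \notin s1.
  by move: (legal_uniq s_legal); rewrite s_def cat_uniq /= => /and3P[_ /norP[]].
have X_p : X p = taxed lt s1 p.
  by rewrite /X s_def index_cat (negbTE p_s1) /= eqxx addn0 take_size_cat.
rewrite X_p; case: pickP => [a /andP[aX /forall_inP a_max] | no_max] //=.
have [|a aX a_max] := exists_maximal (X := taxed lt s1 p).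
  move: s_legal; rewrite s_def => /legal_pick_cat/andP[_ /exists_inP[b bS lt_bp]].
  by apply/set0Pn; exists b; rewrite inE bS.
by have := no_max a; rewrite aX; move/negbT/negP; case; apply/forall_inP.
Qed.

End MaximalTaxed.

Section MatchingToLegal.
Variables (T : finType) (lt : rel T) (rho : T -> nat).
Hypotheses (lt_irr : irreflexive lt) (lt_trans : transitive lt).
Hypothesis rho_graded : graded lt rho.
Variable M : {set T * T}.
Hypothesis M_matching : is_matching lt M.

Lemma covers_of_rank x y : lt x y -> rho y = (rho x).+1 -> covers lt x y.
Proof.
move=> lt_xy rank_y; rewrite /covers lt_xy; apply/forallP => z; apply/negP.
by case/andP=> /(proj1 rho_graded) ? /(proj1 rho_graded); lia.
Qed.

Lemma matching_covers e : e \in M -> covers lt e.1 e.2.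
Proof. exact: (proj1 M_matching). Qed.

Lemma matching_rank e : e \in M -> rho e.2 = (rho e.1).+1.
Proof. by move/matching_covers/(proj2 rho_graded). Qed.

Lemma matching_vertex_inj e f b b' : e \in M -> f \in M ->
  (if b then e.1 else e.2) = (if b' then f.1 else f.2) -> e = f /\ b = b'.
Proof.
move=> eM fM; case: (eqVneq e f) => [<- | ne_ef].
  have ne_e : e.1 != e.2.
    by apply: contraTneq (covers_lt (matching_covers eM)) => ->; rewrite lt_irr.
  by case: b b' => [] [] // E; move: ne_e; rewrite E eqxx.
have [n11 n12 n21 n22] := proj2 M_matching e f eM fM ne_ef.
by case: b b' => [] [] E; [move: n11 | move: n12 | move: n21 | move: n22]; rewrite E eqxx.
Qed.

Section EdgeCycle.
Variables (n : nat) (e0 : T * T) (A : seq (T * T)).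
Hypotheses (A_uniq : uniq A) (A_gt1 : 1 < size A) (A_M : {subset A <= M}).
Hypothesis A_rank : {in A, forall e, rho e.1 = n}.
Hypothesis A_cycle : cycle (fun e f : T * T => lt e.1 f.2) A.

Let A_gt0 : 0 < size A. Proof. exact: ltnW. Qed.
Let Ae l := cyc_nth e0 A l.

Let vx t := if odd t then (Ae t./2).1 else (Ae t./2).2.
Let c := mkseq vx (size A).*2.

Let Ae_M l : Ae l \in M. Proof. exact/A_M/cyc_nth_mem. Qed.

Let Ae_rank l : rho (Ae l).1 = n /\ rho (Ae l).2 = n.+1.
Proof. by rewrite matching_rank // A_rank //; apply: cyc_nth_mem. Qed.

Let Ae_lt l : lt (Ae l).1 (Ae l.+1).2.
Proof. exact: (cycle_cyc_nthP e0 _ A_gt0).1 A_cycle l. Qed.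

Let Ae_succ_neq l : Ae l.+1 != Ae l.
Proof.
rewrite /Ae /cyc_nth nth_uniq ?ltn_pmod //.
by rewrite -addn1 -{2}[l]addn0 eqn_modDl mod0n modn_small.
Qed.

Let vxS t : vx t.+1 = if odd t then (Ae (t./2).+1).2 else (Ae t./2).1.
Proof. by rewrite /vx /= uphalf_half; case: (odd t). Qed.

Let cyc_nth_c t : cyc_nth e0.1 c t = vx t.
Proof.
have K_gt0 : 0 < (size A).*2 by rewrite double_gt0.
have half_mod : (t %% (size A).*2)./2 = t./2 %% size A.
  by rewrite -!divn2 divn_modl ?dvdn2 ?odd_double //; congr (_ %% _); rewrite divn2 doubleK.
rewrite /cyc_nth size_mkseq nth_mkseq ?ltn_pmod // /vx odd_mod ?odd_double //.
by rewrite half_mod /Ae cyc_nth_mod.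
Qed.

Let in_matching_vx t : in_matching M (vx t) (vx t.+1) = ~~ odd t.
Proof.
rewrite vxS /vx /in_matching; case: (odd t) => /=; last first.
  by rewrite -surjective_pairing Ae_M orbT.
set l := t./2; apply/negP => /orP[fwd | bwd].
  have [eq_l _] := matching_vertex_inj (b := true) (b' := true) fwd (Ae_M l) erefl.
  have [eq_l1 _] := matching_vertex_inj (b := false) (b' := false) fwd (Ae_M l.+1) erefl.
  by move: (Ae_succ_neq l); rewrite -eq_l -eq_l1 eqxx.
have := matching_rank bwd; have [-> _] := Ae_rank l; have [_ ->] := Ae_rank l.+1; lia.
Qed.

Let adj_vx t : adj lt (vx t) (vx t.+1).
Proof.
rewrite vxS /vx /adj; case: (odd t) => /=; last by rewrite matching_covers ?orbT.
by rewrite (covers_of_rank (Ae_lt _)) // (proj2 (Ae_rank _)) (proj1 (Ae_rank _)).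
Qed.

Let c_uniq : uniq c.
Proof.
apply/mkseq_uniqP => t t'; rewrite !inE /= => lt_t lt_t' /= vx_tt'.
have [eq_A eq_odd] := matching_vertex_inj (Ae_M _) (Ae_M _) vx_tt'.
have half_lt u : u < (size A).*2 -> u./2 < size A by rewrite -ltn_double; lia.
move: eq_A; rewrite /Ae /cyc_nth !modn_small ?half_lt // => /eqP.
rewrite nth_uniq ?half_lt // => /eqP eq_half.
by rewrite -(odd_double_half t) -(odd_double_half t') eq_odd eq_half.
Qed.

Let c_flat : flat rho c.
Proof.
exists n => _ /mapP[t _ ->]; rewrite /vx.
by case: (odd t); [left; apply: (proj1 (Ae_rank _)) | right; apply: (proj2 (Ae_rank _))].
Qed.

Lemma edge_cycle_flat_alt : exists c, [/\ is_cycle lt c, alternating M c & flat rho c].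
Proof.
have c_gt0 : 0 < size c by rewrite size_mkseq double_gt0.
have edges_gt0 : 0 < size (cycle_edges c) by rewrite size_zip size_rot minnn.
exists c; split; last exact: c_flat.
  apply/and3P; split; [exact: c_uniq | by rewrite size_mkseq -mul2n; lia |].
  by apply/(cycle_cyc_nthP e0.1 _ c_gt0) => t; rewrite !cyc_nth_c adj_vx.
apply/(cycle_cyc_nthP (e0.1, e0.1) _ edges_gt0) => t.
by rewrite !cyc_nth_edges // !cyc_nth_c /= !in_matching_vx /= negbK; case: odd.
Qed.

End EdgeCycle.

Hypothesis M_no_flat_alt_cycle : no_flat_alt_cycle lt rho M.

(* Among the edges of X whose lower ends have minimal rank, the relation
   [lt e.1 f.2] has no cycle, since it would yield a flat alternating one. *)
Lemma exists_first_edge (X : {set T * T}) : X \subset M -> X != set0 ->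
  exists2 f, f \in X & forall e, e \in X -> e != f -> ~~ lt e.1 f.2.
Proof.
move=> XM /set0Pn[e0 e0X].
have [g gX g_min] := arg_minnP (fun e : T * T => rho e.1) e0X.
pose Y := [set e in X | rho e.1 == rho g.1].
pose r := [rel e f | [&& e \in Y, f \in Y, e != f & lt e.1 f.2]].
have YX e : e \in Y -> e \in X by rewrite inE => /andP[].
have rank_Y e : e \in Y -> rho e.1 = rho g.1 by rewrite inE => /andP[_ /eqP].
have lt_in_Y e f : e \in X -> f \in Y -> lt e.1 f.2 -> e \in Y.
  move=> eX fY /(proj1 rho_graded); rewrite matching_rank ?(subsetP XM) ?YX //.
  by rewrite (rank_Y f fY) inE eX /=; have := g_min e eX; lia.
case: (boolP [exists f in Y, [forall e, ~~ r e f]]) => [|no_source].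
  case/exists_inP=> f fY /forallP no_r; exists f => [|e eX ne_ef]; first exact: YX.
  by apply/negP => lt_ef; have := no_r e; rewrite /= (lt_in_Y e f) ?fY ?ne_ef ?lt_ef.
have [|f fY|A A_nil /andP[A_uniq A_cycle]] := no_source_cycle (r := r) (Y := Y).
- by apply/set0Pn; exists g; rewrite inE; apply/andP.
- move/exists_inPn: no_source => /(_ f fY) /forallPn[e]; rewrite negbK => r_ef.
  by exists e => //; case/and3P: r_ef.
have A_Y e : e \in A -> e \in Y by move=> eA; case/and3P: (next_cycle A_cycle eA).
have A_gt1 : 1 < size A.
  by case: A A_nil A_cycle {A_uniq A_Y} => [|e [|? ?]] //= _; rewrite eqxx !andbF.
have r_lt : subrel r (fun e f : T * T => lt e.1 f.2) by move=> e f /and4P[].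
have [c [c_cycle c_alt c_flat]] := edge_cycle_flat_alt (n := rho g.1) g A_uniq A_gt1
  (fun e eA => subsetP XM e (YX e (A_Y e eA))) (fun e eA => rank_Y e (A_Y e eA))
  (sub_cycle r_lt A_cycle).
by case: (M_no_flat_alt_cycle c_cycle c_alt c_flat).
Qed.

Lemma exists_play_order (X : {set T * T}) : X \subset M ->
  exists2 L, perm_eq L (enum X) & pairwise (fun f e : T * T => ~~ lt e.1 f.2) L.
Proof.
move Ek: #|X| => k; elim: k X Ek => [|k IHk] X card_X XM.
  by move/eqP: card_X; rewrite cards_eq0 => /eqP->; exists [::]; rewrite ?enum_set0.
have [|f fX f_first] := exists_first_edge XM; first by rewrite -card_gt0 card_X.
have card_Xf : #|X :\ f| = k by move: card_X; rewrite (cardsD1 f) fX => [[]].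
have [L perm_L L_pw] := IHk _ card_Xf (subset_trans (subD1set X f) XM).
have mem_L e : (e \in L) = (e != f) && (e \in X) by rewrite (perm_mem perm_L) mem_enum !inE.
exists (f :: L).
  apply: uniq_perm; rewrite ?enum_uniq //= ?(perm_uniq perm_L) ?enum_uniq ?mem_L ?eqxx //.
  by move=> e; rewrite inE mem_enum mem_L; case: eqVneq => // ->.
rewrite pairwise_cons L_pw andbT; apply/allP => e.
by rewrite mem_L => /andP[ne_ef eX]; apply: f_first.
Qed.

Lemma legal_from_ordered_edges (L : seq (T * T)) (S : {set T}) :
  uniq L -> {subset L <= M} -> pairwise (fun f e : T * T => ~~ lt e.1 f.2) L ->
  (forall e, e \in L -> (e.1 \in S) && (e.2 \in S)) -> legal_from lt S (map snd L).
Proof.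
elim: L S => [|f L IHL] S //= /andP[f_L L_uniq] LM /andP[/allP f_first L_pw] L_S.
have fM : f \in M by apply: LM; rewrite mem_head.
have /andP[f1S f2S] := L_S f (mem_head _ _).
rewrite /legal_pick f2S; apply/andP; split.
  by apply/exists_inP; exists f.1; rewrite // covers_lt ?matching_covers.
apply: IHL => // [e eL | e eL]; first by apply: LM; rewrite inE eL orbT.
have e_fL : e \in f :: L by rewrite inE eL orbT.
have eM : e \in M := LM e e_fL.
have ne_ef : e != f by apply: contraNneq f_L => <-.
have [_ ne12 _ ne22] := proj2 M_matching e f eM fM ne_ef.
have /andP[e1S e2S] := L_S e e_fL.
have n_lt1 := f_first e eL.
rewrite !in_step e1S e2S ne12 ne22 n_lt1 /=.
by apply: contra n_lt1 => /(lt_trans (covers_lt (matching_covers eM))).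
Qed.

Lemma matching_legal (R : numDomainType) (w : T -> R) :
  exists s, [/\ legal lt s, perm_eq s [seq e.2 | e <- enum M] & score w s = mweight w M].
Proof.
have [L perm_L L_pw] := exists_play_order (subxx M).
exists (map snd L); split; last 1 first.
- by rewrite /score /mweight big_map (perm_big _ perm_L) big_enum.
- apply: legal_from_ordered_edges => // [|e|e _]; rewrite ?inE //.
    by rewrite (perm_uniq perm_L) enum_uniq.
  by rewrite (perm_mem perm_L) mem_enum.
exact: perm_map.
Qed.

End MatchingToLegal.

Lemma max_transfer (R : numDomainType) (A B : Type) (PA : A -> Prop) (PB : B -> Prop)
    (fA : A -> R) (fB : B -> R) :
  (forall a, PA a -> exists2 b, PB b & fB b = fA a) ->
  (forall b, PB b -> exists2 a, PA a & fA a = fB b) ->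
  forall m, ((exists a, PA a /\ fA a = m) /\ (forall a, PA a -> (fA a <= m)%R)) <->
            ((exists b, PB b /\ fB b = m) /\ (forall b, PB b -> (fB b <= m)%R)).
Proof.
move=> AB BA m; split=> [[[a [PAa <-]] maxA] | [[b [PBb <-]] maxB]]; split.
- by have [b PBb eq_b] := AB a PAa; exists b.
- by move=> b' /BA[a' PAa' <-]; apply: maxA.
- by have [a PAa eq_a] := BA b PBb; exists a.
- by move=> a' /AB[b' PBb' <-]; apply: maxB.
Qed.

Theorem theorem1 (R : realFieldType) (T : finType) (lt : rel T)
    (rho : T -> nat) (w : T -> R) :
  irreflexive lt -> transitive lt -> graded lt rho ->
  [/\ (forall m : R, is_max_score lt w m <-> is_max_matching_weight lt w rho m),
      (forall (s : seq T) (q : T -> T), legal lt s ->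
         (forall s1 p s2, s = s1 ++ p :: s2 -> maximal_in lt (q p) (taxed lt s1 p)) ->
         [/\ good_matching lt rho [set (q p, p) | p in s],
             (forall p, p \in s -> covers lt (q p) p)
           & mweight w [set (q p, p) | p in s] = score w s])
    & (forall M : {set T * T}, good_matching lt rho M ->
         exists s : seq T, [/\ legal lt s, perm_eq s [seq e.2 | e <- enum M]
                             & score w s = mweight w M])].
Proof.
move=> lt_irr lt_trans rho_graded.
have to_legal M : good_matching lt rho M -> exists s : seq T,
    [/\ legal lt s, perm_eq s [seq e.2 | e <- enum M] & score w s = mweight w M].
  by case=> M_matching M_flat; apply: (matching_legal lt_irr lt_trans rho_graded M_matching).
split=> // [m | s q s_legal q_max]; last exact: picked_matching_spec.
apply: max_transfer => [s s_legal | M /to_legal[s [s_legal _ <-]]]; last by exists s.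
have [q q_max] := exists_maximal_taxed rho_graded s_legal.
have [M_good _ <-] := picked_matching_spec lt_irr lt_trans rho_graded s_legal q_max w.
by exists [set (q p, p) | p in s].
Qed.
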